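(* Under the standing assumptions below, suppose in addition that $\{\pi_i\}_{i\in\mathbb{N}_0}$ is orthogonal with respect to $W^{(\alpha)}_\tau$ on $[-1,1]$ (e.g. a family of exceptional Gegenbauer polynomials), let $m\in\mathbb{N}_0$, $t\in\mathbb{R}$ with $1+t\nu_m>0$. Then for all $i\in\mathbb{N}_0$, $$\nu_{m;i}^{-1}=\nu_i^{-1}+\delta_{im}\,t,$$ i.e. $\nu_{m;i}=\nu_i$ for $i\ne m$ and $\nu_{m;m}=\nu_m/(1+t\nu_m)$.
   Context: For a nonzero function $\tau$ and $\alpha\in\mathbb{R}$, $W^{(\alpha)}_\tau=(1-z^2)^{\alpha-1/2}\tau^{-2}$ and $T^{(\alpha)}_\tau=(1-z^2)\left(D_z^2-2\frac{\tau_z}{\tau}D_z+\frac{\tau_{zz}}{\tau}\right)-(2\alpha+1)zD_z+(2\alpha-1)z\frac{\tau_z}{\tau}$. $T^{(\alpha)}_\tau$ is an exceptional Gegenbauer operator if it has polynomial eigenfunctions $\{\pi_i\}_{i\in\mathbb{N}_0}$ of pairwise distinct degrees, with only finitely many nonnegative integers missing from $\{\deg\pi_i\}$. Standing assumptions: $\alpha\in\mathbb{N}_0+\frac12$; $\tau$ is a polynomial with no zeros on $[-1,1]$ such that $T^{(\alpha)}_\tau$ is an exceptional Gegenbauer operator with eigenpolynomials $T^{(\alpha)}_\tau\pi_i=\lambda_i\pi_i$, the $\lambda_i$ pairwise distinct; $\rho_{ij}(z)=\int_{-1}^z\pi_i\pi_jW^{(\alpha)}_\tau\,du$; $\tau_m(z,t)=\tau(z)(1+t\rho_{mm}(z))$;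 $\pi_{m;i}(z,t)=(1+t\rho_{mm})\pi_i-t\rho_{im}\pi_m$; and it is assumed that all $\rho_{ij}$ are rational functions of $z$ and all $\tau_m,\pi_{m;i}$ are polynomials in $z$. Norms: $\nu_i=\int_{-1}^1\pi_i^2W^{(\alpha)}_\tau\,dz$ and $\nu_{m;i}=\int_{-1}^1\pi_{m;i}^2W^{(\alpha)}_{\tau_m}\,dz$. *)

From Stdlib Require Import Reals.
From Coquelicot Require Import Coquelicot.
From mathcomp Require Import all_boot all_algebra.
From mathcomp Require Import Rstruct.

Set Implicit Arguments.
Unset Strict Implicit.
Unset Printing Implicit Defensive.

Local Open Scope R_scope.

Definition alpha (k : nat) : R := INR k + / 2.

(* W^{(alpha)}_tau (z) = (1 - z^2)^(alpha - 1/2) tau(z)^(-2), with alpha - 1/2 = k *)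
Definition Wgt (k : nat) (tau : R -> R) (z : R) : R :=
  (1 - z ^ 2) ^ k / (tau z) ^ 2.

(* T^{(alpha)}_tau applied to a polynomial p, evaluated at z (meaningful where tau(z) <> 0) *)
Definition Top (k : nat) (tau p : {poly R}) (z : R) : R :=
  (1 - z ^ 2) * (((p^`(2)).[z])%R - 2 * (((tau^`()).[z])%R / (tau.[z])%R) * ((p^`()).[z])%R
                  + (((tau^`(2)).[z])%R / (tau.[z])%R) * (p.[z])%R)
  - (2 * alpha k + 1) * z * ((p^`()).[z])%R
  + (2 * alpha k - 1) * z * (((tau^`()).[z])%R / (tau.[z])%R) * (p.[z])%R.

(* T^{(alpha)}_tau is an exceptional Gegenbauer operator with eigenpolynomials
   pi_i and eigenvalues lam_i: nonzero polynomial eigenfunctions (identity of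
   rational functions, i.e. wherever tau does not vanish), pairwise distinct
   degrees, only finitely many degrees missing. *)
Definition exc_gegenbauer (k : nat) (tau : {poly R}) (pi : nat -> {poly R})
    (lam : nat -> R) : Prop :=
  (forall i, pi i != 0%R) /\
  (forall i z, (tau.[z])%R <> 0 -> Top k tau (pi i) z = lam i * ((pi i).[z])%R) /\
  injective (fun i => (size (pi i)).-1) /\
  (exists N : nat, forall n : nat, (N <= n)%N -> exists i, (size (pi i)).-1 = n).

Definition rho (k : nat) (tau : {poly R}) (pi : nat -> {poly R}) (i j : nat) (z : R) : R :=
  RInt (fun u => ((pi i).[u])%R * ((pi j).[u])%R * Wgt k (fun x => (tau.[x])%R) u) (-1) z.

Definition taum (k : nat) (tau : {poly R}) (pi : nat -> {poly R}) (m : nat) (t z : R) : R :=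
  (tau.[z])%R * (1 + t * rho k tau pi m m z).

Definition pim (k : nat) (tau : {poly R}) (pi : nat -> {poly R}) (m i : nat) (t z : R) : R :=
  (1 + t * rho k tau pi m m z) * ((pi i).[z])%R - t * rho k tau pi i m z * ((pi m).[z])%R.

Definition nu (k : nat) (tau : {poly R}) (pi : nat -> {poly R}) (i : nat) : R :=
  RInt (fun z => ((pi i).[z])%R ^ 2 * Wgt k (fun x => (tau.[x])%R) z) (-1) 1.

Definition nuT (k : nat) (tau : {poly R}) (pi : nat -> {poly R}) (m : nat) (t : R) (i : nat) : R :=
  RInt (fun z => pim k tau pi m i t z ^ 2 * Wgt k (taum k tau pi m t) z) (-1) 1.

(* With D = 1 + t rho_mm one has rho_im' = pi_i pi_m W and D' = t pi_m^2 W, hence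
   pi_{m;i}^2 W_{tau_m} = (D pi_i - t rho_im pi_m)^2 W / D^2 = pi_i^2 W - (t rho_im^2 / D)'.
   Integrating over [-1, 1] gives nu_{m;i} = nu_i - t rho_im(1)^2 / (1 + t nu_m).
   Orthogonality makes rho_im(1) vanish for i <> m, while rho_mm(1) = nu_m > 0 gives
   nu_{m;m} = nu_m / (1 + t nu_m).  The integration is legitimate because D > 0 on
   [-1, 1]: rho_mm increases from 0 to nu_m, and both 1 and 1 + t nu_m are positive. *)

From Stdlib Require Import Reals Lra Lia.
From Coquelicot Require Import Coquelicot.
From mathcomp Require Import all_boot all_algebra.
From mathcomp Require Import Rstruct.
Local Open Scope R_scope.

Lemma continuous_pow (f : R -> R) n x :
  continuous f x -> continuous (fun y => f y ^ n) x.
Proof.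
move=> cf; elim: n => [|n IHn] /=; first exact: continuous_const.
exact: continuous_mult.
Qed.

Lemma continuous_horner (p : {poly R}) x : continuous (fun y => p.[y]%R) x.
Proof.
elim/poly_ind: p => [|p c IHp].
  by apply: (continuous_ext (fun _ => 0)) => [y|]; rewrite ?horner0 //; apply: continuous_const.
apply: (continuous_ext (fun y => p.[y]%R * y + c)) => [y|].
  by rewrite hornerMXaddC.
apply: continuous_plus; last exact: continuous_const.
by apply: continuous_mult => //; apply: continuous_id.
Qed.

Definition clamp (a b z : R) := Rmax a (Rmin b z).

Lemma clamp_in a b z : a <= b -> a <= clamp a b z <= b.
Proof. rewrite /clamp /Rmax /Rmin; repeat case: Rle_dec; lra. Qed.

Lemma clamp_id a b z : a <= z <= b -> clamp a b z = z.
Proof. rewrite /clamp /Rmax /Rmin; repeat case: Rle_dec; lra. Qed.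

Lemma continuous_clamp a b x : continuous (clamp a b) x.
Proof.
have lip y z : Rabs (clamp a b y - clamp a b z) <= Rabs (y - z).
  rewrite /clamp /Rmax /Rmin; repeat case: Rle_dec; split_Rabs; lra.
apply/continuity_pt_filterlim => eps eps_gt0; exists eps; split => // y [_ Hy].
exact: Rle_lt_trans (lip _ _) Hy.
Qed.

Lemma continuous_comp_clamp a b (f : R -> R) :
  a <= b -> (forall x, a <= x <= b -> continuous f x) ->
  forall x, continuous (fun z => f (clamp a b z)) x.
Proof.
move=> le_ab cf x; apply: continuous_comp; first exact: continuous_clamp.
exact/cf/clamp_in.
Qed.

Lemma RInt_ext_segment (f g : R -> R) a b :
  a <= b -> (forall x, a <= x <= b -> f x = g x) -> RInt f a b = RInt g a b.
Proof.
move=> le_ab efg; apply: RInt_ext => x.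
by rewrite Rmin_left ?Rmax_right // => Hx; apply: efg; lra.
Qed.

Lemma is_derive_RInt_continuous (f : R -> R) a x :
  (forall y, continuous f y) -> is_derive (fun z => RInt f a z) x (f x).
Proof.
move=> cf; apply: is_derive_RInt; last exact: cf.
apply: filter_forall => z; apply: RInt_correct.
by apply: ex_RInt_continuous => y _; apply: cf.
Qed.

Lemma ex_RInt_subsegment (f : R -> R) a b c d :
  (forall x, a <= x <= b -> continuous f x) -> a <= c -> c <= d -> d <= b ->
  ex_RInt f c d.
Proof.
move=> cf ac cd db; apply: ex_RInt_continuous => y.
by rewrite Rmin_left ?Rmax_right // => Hy; apply: cf; lra.
Qed.

Lemma RInt_nonneg_bounds (f : R -> R) a b z :
  (forall x, a <= x <= b -> continuous f x) -> (forall x, a <= x <= b -> 0 <= f x) ->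
  a <= z <= b -> 0 <= RInt f a z <= RInt f a b.
Proof.
move=> cf f_ge0 Hz.
have ge0 c d : a <= c -> c <= d -> d <= b -> 0 <= RInt f c d.
  move=> ac cd db; apply: RInt_ge_0 => // [|y Hy]; first exact: ex_RInt_subsegment cf _ _ _.
  apply: f_ge0; lra.
have : RInt f a z + RInt f z b = RInt f a b.
  by apply: RInt_Chasles; apply: ex_RInt_subsegment cf _ _ _; lra.
have := ge0 a z; have := ge0 z b; lra.
Qed.

Lemma RInt_gt_0_of_pos_point (f : R -> R) a b c :
  (forall x, a <= x <= b -> continuous f x) -> (forall x, a <= x <= b -> 0 <= f x) ->
  a < c < b -> 0 < f c -> 0 < RInt f a b.
Proof.
move=> cf f_ge0 Hc fc_gt0.
have [eps f_pos] : locally c (fun y => 0 < f y).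
  by apply: (cf c ltac:(lra)); apply: open_gt.
pose d := Rmin (eps / 2) (Rmin (c - a) (b - c)).
have Hd : 0 < d /\ d <= eps / 2 /\ d <= c - a /\ d <= b - c.
  have := cond_pos eps; rewrite /d /Rmin; repeat case: Rle_dec; lra.
have mid_gt0 : 0 < RInt f (c - d) (c + d).
  apply: RInt_gt_0 => [|y Hy|y Hy]; try lra; last by apply: cf; lra.
  apply: f_pos; change (Rabs (y - c) < eps); split_Rabs; lra.
have cf' x : c - d <= x <= b -> continuous f x by move=> Hx; apply: cf; lra.
have f_ge0' x : c - d <= x <= b -> 0 <= f x by move=> Hx; apply: f_ge0; lra.
have [_ mid_le] := RInt_nonneg_bounds _ _ _ (c + d) cf' f_ge0' ltac:(lra).
have [left_ge0 _] := RInt_nonneg_bounds _ _ _ (c - d) cf f_ge0 ltac:(lra).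
have : RInt f a (c - d) + RInt f (c - d) b = RInt f a b.
  by apply: RInt_Chasles; apply: ex_RInt_subsegment cf _ _ _; lra.
lra.
Qed.

Lemma poly_exists_nonroot (p : {poly R}) a b :
  a < b -> p != 0%R -> exists c, a < c < b /\ p.[c]%R <> 0.
Proof.
move=> lt_ab p0; pose n := size p.
pose pt j := a + INR j.+1 / INR n.+1 * (b - a).
have n1_gt0 : 0 < INR n.+1 by apply: lt_0_INR; lia.
have pt_in j : (j < n)%N -> a < pt j < b.
  move=> /ltP jn.
  have j1_gt0 : 0 < INR j.+1 by apply: lt_0_INR; lia.
  have j1_lt : INR j.+1 < INR n.+1 by apply: lt_INR; lia.
  have r_gt0 : 0 < INR j.+1 / INR n.+1 by apply: Rdiv_lt_0_compat.
  have r_lt1 : INR j.+1 / INR n.+1 < 1.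
    by apply: (Rmult_lt_reg_r (INR n.+1)) => //; field_simplify; lra.
  rewrite /pt; nra.
have pt_inj : injective pt.
  move=> i j /(Rplus_eq_reg_l a) /(Rmult_eq_reg_r _ _ _) /(_ ltac:(lra)) e.
  have /INR_eq [] // : INR i.+1 = INR j.+1.
  by apply: (Rmult_eq_reg_r (/ INR n.+1)) => //; apply: Rinv_neq_0_compat; lra.
have /allPn [_ /mapP [j j_in ->] /eqP nonroot] : ~~ all (root p) (map pt (iota 0 n)).
  apply/negP => all_root.
  have := max_poly_roots p0 all_root.
  by rewrite map_inj_uniq ?iota_uniq // size_map size_iota ltnn => /(_ isT).
by exists (pt j); split => //; apply: pt_in; rewrite mem_iota in j_in.
Qed.

Section DeformedNorm.
Variables (a b t : R) (w g h : R -> R).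
Hypothesis le_ab : a <= b.

Let on_segment (u : R -> R) := forall x, a <= x <= b -> continuous u x.

Hypotheses (w_cont : on_segment w) (g_cont : on_segment g) (h_cont : on_segment h).
Hypothesis deformation_nz :
  forall z, a <= z <= b -> 1 + t * RInt (fun y => h y * h y * w y) a z <> 0.

(* Composing with [clamp a b] extends the integrands continuously to all of R,
   so that their primitives are differentiable at the endpoints too. *)
Let ext_prod (u v : R -> R) y := u (clamp a b y) * v (clamp a b y) * w (clamp a b y).
Let Rx (u v : R -> R) z := RInt (ext_prod u v) a z.

Let ext_prod_continuous u v x : on_segment u -> on_segment v -> continuous (ext_prod u v) x.
Proof.
move=> cu cv; apply: (continuous_comp_clamp a b (fun y => u y * v y * w y)) => // y Hy.
by do 2?apply: continuous_mult; [apply: cu|apply: cv|apply: w_cont].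
Qed.

Let is_derive_Rx u v x :
  on_segment u -> on_segment v -> is_derive (Rx u v) x (ext_prod u v x).
Proof. by move=> cu cv; apply: is_derive_RInt_continuous => y; apply: ext_prod_continuous. Qed.

Let Rx_continuous u v x : on_segment u -> on_segment v -> continuous (Rx u v) x.
Proof. by move=> cu cv; apply: ex_derive_continuous; eexists; apply: is_derive_Rx. Qed.

Let Rx_segment u v z :
  a <= z <= b -> Rx u v z = RInt (fun y => u y * v y * w y) a z.
Proof.
by move=> Hz; apply: RInt_ext_segment => [|y Hy]; rewrite ?/ext_prod ?clamp_id //; lra.
Qed.

Let D z := 1 + t * Rx h h z.
Let G := Rx g h.
Let F x := (D x * g (clamp a b x) - t * G x * h (clamp a b x)) ^ 2
           * (w (clamp a b x) / D x ^ 2).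

Let D_nz x : a <= x <= b -> D x <> 0.
Proof. by move=> Hx; rewrite /D Rx_segment //; apply: deformation_nz. Qed.

Let D_continuous x : continuous D x.
Proof.
apply: continuous_plus; first exact: continuous_const.
by apply: continuous_mult; [exact: continuous_const | exact: Rx_continuous].
Qed.

(* [F] is [g^2 w] minus an exact derivative, because [G' = g h w] and [D' = t h^2 w]. *)
Let is_derive_correction x : a <= x <= b ->
  is_derive (fun z => t * G z ^ 2 / D z) x (ext_prod g g x - F x).
Proof.
move=> Hx.
have dG2 := is_derive_scal _ _ t _ (is_derive_pow _ 2 _ _ (is_derive_Rx g h x g_cont h_cont)).
have dD : is_derive D x (0 + t * ext_prod h h x).
  apply: (@is_derive_plus R_AbsRing R_NormedModule (fun _ => 1)).
    exact: is_derive_const.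
  exact/is_derive_scal/is_derive_Rx.
apply: (@eq_ind R _ _ (is_derive_div _ _ _ _ _ dG2 dD (D_nz x Hx))).
by rewrite /F /ext_prod /G /=; field; apply: D_nz.
Qed.

Let F_continuous x : a <= x <= b -> continuous F x.
Proof.
have cext u : on_segment u -> continuous (fun y => u (clamp a b y)) x.
  by move=> cu; apply: continuous_comp_clamp.
move=> Hx; apply: continuous_mult.
  apply: continuous_pow; apply: continuous_minus.
    by apply: continuous_mult; [exact: D_continuous | exact: cext].
  apply: continuous_mult; last exact: cext.
  by apply: continuous_mult; [exact: continuous_const | exact: Rx_continuous].
apply: continuous_mult; first exact: cext.
apply: continuous_Rinv_comp; first exact: continuous_pow.
exact/pow_nonzero/D_nz.
Qed.

Let RInt_F : RInt F a b = Rx g g b - t * G b ^ 2 / D b.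
Proof.
have in_segment x : Rmin a b <= x <= Rmax a b -> a <= x <= b.
  by rewrite Rmin_left ?Rmax_right.
have FTC := is_RInt_derive (fun z => t * G z ^ 2 / D z) _ a b
  (fun x Hx => is_derive_correction x (in_segment x Hx))
  (fun x Hx => continuous_minus _ _ _ (ext_prod_continuous g g x g_cont g_cont)
                 (F_continuous x (in_segment x Hx))).
have Igg : is_RInt (ext_prod g g) a b (Rx g g b).
  by apply: RInt_correct; apply: ex_RInt_continuous => x _; apply: ext_prod_continuous.
rewrite (RInt_ext F (fun y => minus (ext_prod g g y) (ext_prod g g y - F y))) => [|y _];
  last by change (F y = ext_prod g g y - (ext_prod g g y - F y)); ring.
rewrite (is_RInt_unique _ _ _ _ (is_RInt_minus _ _ _ _ _ _ Igg FTC)).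
have G_a : G a = 0 by rewrite /G /Rx RInt_point.
change (Rx g g b - (t * G b ^ 2 / D b - t * G a ^ 2 / D a)
        = Rx g g b - t * G b ^ 2 / D b).
by rewrite G_a; field; split; apply: D_nz; lra.
Qed.

Lemma RInt_deformed_norm :
  RInt (fun z => ((1 + t * RInt (fun y => h y * h y * w y) a z) * g z
                  - t * RInt (fun y => g y * h y * w y) a z * h z) ^ 2
                 * (w z / (1 + t * RInt (fun y => h y * h y * w y) a z) ^ 2)) a b
  = RInt (fun z => g z * g z * w z) a b
    - t * RInt (fun y => g y * h y * w y) a b ^ 2
      / (1 + t * RInt (fun y => h y * h y * w y) a b).
Proof.
rewrite (RInt_ext_segment _ F) // => [|z Hz]; last first.
  by rewrite /F /D /G /ext_prod clamp_id // !Rx_segment.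
by rewrite RInt_F /D /G !Rx_segment //; lra.
Qed.

End DeformedNorm.

Lemma Wgt_continuous k (tau : {poly R}) x :
  tau.[x]%R <> 0 -> continuous (Wgt k (fun y => tau.[y]%R)) x.
Proof.
move=> tau_x; apply: continuous_mult.
  apply: continuous_pow; apply: continuous_minus; first exact: continuous_const.
  by apply: continuous_pow; apply: continuous_id.
apply: continuous_Rinv_comp; first by apply: continuous_pow; apply: continuous_horner.
exact: pow_nonzero.
Qed.

Lemma Wgt_ge0 k (tau : {poly R}) z :
  -1 <= z <= 1 -> tau.[z]%R <> 0 -> 0 <= Wgt k (fun y => tau.[y]%R) z.
Proof.
move=> Hz tau_z; rewrite /Wgt; apply: Rmult_le_pos; first by apply: pow_le; nra.
by apply/Rlt_le/Rinv_0_lt_compat/pow2_gt_0.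
Qed.

Lemma Wgt_gt0 k (tau : {poly R}) z :
  -1 < z < 1 -> tau.[z]%R <> 0 -> 0 < Wgt k (fun y => tau.[y]%R) z.
Proof.
move=> Hz tau_z; rewrite /Wgt; apply: Rmult_lt_0_compat; first by apply: pow_lt; nra.
exact/Rinv_0_lt_compat/pow2_gt_0.
Qed.

Lemma Wgt_taum k tau pi m t z :
  Wgt k (taum k tau pi m t) z
  = Wgt k (fun y => tau.[y]%R) z / (1 + t * rho k tau pi m m z) ^ 2.
Proof. by rewrite /Wgt /taum /Rdiv Rpow_mult_distr; rewrite Rinv_mult Rmult_assoc. Qed.

Section PolynomialWeight.
Variables (k : nat) (tau : {poly R}) (pi : nat -> {poly R}).
Hypothesis tau_nz : forall z, -1 <= z <= 1 -> tau.[z]%R <> 0.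

Let W := Wgt k (fun y => tau.[y]%R).

Let square_weight_continuous i x :
  -1 <= x <= 1 -> continuous (fun z => (pi i).[z]%R * (pi i).[z]%R * W z) x.
Proof.
move=> Hx; apply: continuous_mult; first by apply: continuous_mult; apply: continuous_horner.
by apply: Wgt_continuous; apply: tau_nz.
Qed.

Let square_weight_ge0 i z : -1 <= z <= 1 -> 0 <= (pi i).[z]%R * (pi i).[z]%R * W z.
Proof. by move=> Hz; apply: Rmult_le_pos; [apply: Rle_0_sqr | apply: Wgt_ge0 => //; apply: tau_nz]. Qed.

Lemma nu_rho i : nu k tau pi i = rho k tau pi i i 1.
Proof. by apply: RInt_ext => z _; rewrite /=; ring. Qed.

Lemma rho_diag_bounds m z :
  -1 <= z <= 1 -> 0 <= rho k tau pi m m z <= nu k tau pi m.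
Proof.
rewrite nu_rho; apply: RInt_nonneg_bounds => x Hx.
  exact: square_weight_continuous.
exact: square_weight_ge0.
Qed.

Lemma nu_gt0 i : pi i != 0%R -> 0 < nu k tau pi i.
Proof.
move=> pi_nz; have [c [Hc pi_c]] := poly_exists_nonroot _ (-1) 1 ltac:(lra) pi_nz.
rewrite nu_rho; apply: (RInt_gt_0_of_pos_point _ _ _ c) => //.
- exact: square_weight_continuous.
- exact: square_weight_ge0.
- apply: Rmult_lt_0_compat; first exact: Rsqr_pos_lt.
  by apply: Wgt_gt0 => //; apply: tau_nz; lra.
Qed.

Lemma nuT_deformed_norm m t i :
  (forall z, -1 <= z <= 1 -> 1 + t * rho k tau pi m m z <> 0) ->
  nuT k tau pi m t i
  = nu k tau pi i - t * rho k tau pi i m 1 ^ 2 / (1 + t * nu k tau pi m).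
Proof.
move=> D_nz; rewrite /nuT; under RInt_ext => z _ do rewrite Wgt_taum /pim.
rewrite (RInt_deformed_norm _ _ _ W) ?(nu_rho i) ?(nu_rho m) //; try lra.
- by move=> x Hx; apply: Wgt_continuous; apply: tau_nz.
- by move=> x _; apply: continuous_horner.
- by move=> x _; apply: continuous_horner.
Qed.

End PolynomialWeight.

Theorem mainTheorem13 (k : nat) (tau : {poly R}) (pi : nat -> {poly R}) (lam : nat -> R)
  (Htau : forall z, -1 <= z <= 1 -> (tau.[z])%R <> 0)
  (Hexc : exc_gegenbauer k tau pi lam)
  (Hlam : injective lam)
  (Hrho : forall i j : nat, exists P Q : {poly R}, Q != 0%R /\
            forall z, -1 <= z <= 1 -> (Q.[z])%R <> 0 -> rho k tau pi i j z = (P.[z])%R / (Q.[z])%R)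
  (Htaum : forall (m : nat) (t : R), exists P : {poly R},
            forall z, -1 <= z <= 1 -> taum k tau pi m t z = (P.[z])%R)
  (Hpim : forall (m i : nat) (t : R), exists P : {poly R},
            forall z, -1 <= z <= 1 -> pim k tau pi m i t z = (P.[z])%R)
  (Horth : forall i j : nat, i <> j ->
            RInt (fun z => ((pi i).[z])%R * ((pi j).[z])%R * Wgt k (fun x => (tau.[x])%R) z) (-1) 1 = 0)
  (m : nat) (t : R) (Ht : 1 + t * nu k tau pi m > 0) :
  forall i : nat,
    / nuT k tau pi m t i = / nu k tau pi i + (if (i == m)%N then t else 0).
Proof.
move=> i; have [pi_nz _] := Hexc.
have D_pos z : -1 <= z <= 1 -> 0 < 1 + t * rho k tau pi m m z.
  move=> Hz; have [rho_ge0 rho_le] := rho_diag_bounds k tau pi Htau m z Hz.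
  by case: (Rle_lt_dec 0 t) => t_sign; nra.
rewrite nuT_deformed_norm // => [|z /D_pos]; last lra.
case: eqP => [->|ne_im].
  have nu_m_gt0 := nu_gt0 k tau pi Htau m (pi_nz m).
  by rewrite -nu_rho; field; lra.
have -> : rho k tau pi i m 1 = 0 by apply: Horth.
by rewrite Rplus_0_r; congr Rinv; rewrite /Rdiv; ring.
Qed.
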